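(* Let $S \geq 1$ and, for $i = 1,\dots,S$, let $\boldsymbol{M}_i \in \mathbb{R}^{m_i \times m_i}$ be symmetric positive definite, let $\boldsymbol{K}_i \in \mathbb{R}^{m_i \times m_i}$ be symmetric positive semidefinite, and let $\boldsymbol{C}_i \in \mathbb{R}^{p \times m_i}$ be signed Boolean matrices such that $[\boldsymbol{C}_1 \ \cdots \ \boldsymbol{C}_S]$ has full row rank $p$. Let $0 \le \gamma \le 1$, $\Delta t > 0$ and $\alpha > 0$, and let $\omega_i^{\max}$ denote the largest eigenvalue of $\boldsymbol{K}_i \boldsymbol{\phi} = \omega \boldsymbol{M}_i \boldsymbol{\phi}$. Assume that either $1/2 \le \gamma \le 1$ (with no further restriction on $\alpha>0$, $\Delta t>0$), or $0 \le \gamma < 1/2$ together with $\alpha \le 1/|\gamma - 1/2|$ and $\Delta t\, \omega_i^{\max} \le \frac{2}{1-2\gamma} - \alpha$ for all $i$. Suppose sequences $\boldsymbol{d}_i^{(n)}, \boldsymbol{v}_i^{(n)} \in \mathbb{R}^{m_i}$ and $\boldsymbol{\lambda}^{(n)} \in \mathbb{R}^p$, $n \geq 0$, satisfy (the Baumgarte stabilized method with zero external forcing): for all $n \ge 0$ and all $i$, $\boldsymbol{M}_i \boldsymbol{v}_i^{(n)} + \boldsymbol{K}_i \boldsymbol{d}_i^{(n)} = \boldsymbol{C}_i^{\mathrm{T}} \boldsymbol{\lambda}^{(n)}$ and $\sum_{i=1}^S \boldsymbol{C}_i \boldsymbol{v}_i^{(n)} + \frac{\alpha}{\Delta t}\sum_{i=1}^S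 \boldsymbol{C}_i \boldsymbol{d}_i^{(n)} = \boldsymbol{0}$; and for all $n \geq 1$, $\boldsymbol{d}_i^{(n)} = \boldsymbol{d}_i^{(n-1)} + \Delta t\left((1-\gamma)\boldsymbol{v}_i^{(n-1)} + \gamma \boldsymbol{v}_i^{(n)}\right)$. Then the sequences $(\boldsymbol{v}_i^{(n)})_n$, $(\boldsymbol{d}_i^{(n+1)} - \boldsymbol{d}_i^{(n)})_n$ ($i=1,\dots,S$), $(\boldsymbol{\lambda}^{(n+1)} - \boldsymbol{\lambda}^{(n)})_n$ and the constraint drift $\left(\sum_{i=1}^S \boldsymbol{C}_i \boldsymbol{d}_i^{(n)}\right)_n$ are all bounded.
   Context: A signed Boolean matrix is a matrix whose entries are in $\{-1,0,+1\}$ and each of whose rows has at most one nonzero entry. A sequence of vectors is bounded if there is a constant $C$ independent of $n$ with $\|\boldsymbol{x}^{(n)}\| < C$ for all $n$. For $\omega_i^{\max} > 0$ the time-step condition reads $\Delta t \le \frac{2}{(1-2\gamma)\omega_i^{\max}} - \frac{\alpha}{\omega_i^{\max}}$. *)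

From HB Require Import structures.
From mathcomp Require Import all_boot all_order all_algebra.
From mathcomp Require Import reals.
Set Implicit Arguments. Unset Strict Implicit. Unset Printing Implicit Defensive.
Import Order.TTheory GRing.Theory Num.Theory.
Local Open Scope ring_scope.

Definition sym_mx {R : realType} {m : nat} (A : 'M[R]_m) : Prop := A^T = A.

Definition spd_mx {R : realType} {m : nat} (A : 'M[R]_m) : Prop :=
  sym_mx A /\ forall x : 'cV[R]_m, x != 0 -> 0 < (x^T *m A *m x) ord0 ord0.

Definition spsd_mx {R : realType} {m : nat} (A : 'M[R]_m) : Prop :=
  sym_mx A /\ forall x : 'cV[R]_m, 0 <= (x^T *m A *m x) ord0 ord0.

Definition signed_boolean_mx {R : realType} {p m : nat} (C : 'M[R]_(p, m)) : Prop :=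
  (forall i j, C i j = 0 \/ C i j = 1 \/ C i j = -1) /\
  (forall i j k, C i j != 0 -> C i k != 0 -> j = k).

Definition gen_eigenvalue {R : realType} {m : nat} (K M : 'M[R]_m) (w : R) : Prop :=
  exists phi : 'cV[R]_m, phi != 0 /\ K *m phi = w *: (M *m phi).

Definition largest_gen_eigenvalue {R : realType} {m : nat} (K M : 'M[R]_m) (w : R) : Prop :=
  gen_eigenvalue K M w /\ forall w', gen_eigenvalue K M w' -> w' <= w.

(* A sequence of vectors is bounded: there is C with ||x^(n)|| < C for all n
   (max-norm on entries; all norms are equivalent in finite dimension). *)
Definition bounded_seq {R : realType} {a b : nat} (x : nat -> 'M[R]_(a, b)) : Prop :=
  exists C : R, forall n i j, `|x n i j| < C.

From mathcomp Require Import all_boot all_order all_algebra.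
From mathcomp Require Import reals.
From mathcomp Require Import boolp classical_sets topology normedtype derive.
From mathcomp Require Import ring lra.
Import Order.TTheory GRing.Theory Num.Theory.
Local Open Scope ring_scope.
Set Implicit Arguments. Unset Strict Implicit. Unset Printing Implicit Defensive.

(* Stack the subsystems into one block-diagonal system with constraint matrix
   [C = (C_1 ... C_S)].  The Baumgarte condition makes the drift geometric,
   [C d_n = r^n C d_0] with [r = (1 - alpha (1 - gamma)) / (1 + alpha gamma)],
   and the hypotheses give [|r| <= 1].  The corrected velocity
   [V_n = v_n + (alpha / dt) r^n d_0] then lies in the kernel of [C], so testing
   the equilibrium equations with kernel vectors eliminates the multipliers and
   yields an energy identity for [|V_n|_M^2] whose forcing decays like [r^n]; for
   [gamma < 1/2] the time-step restriction controls the Newmark defect term.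
   When [|r| < 1] a discrete Gronwall argument bounds the energy; in the limiting
   case [alpha (1 - 2 gamma) = 2] the time-step restriction forces [K = 0] and
   the bound is immediate.  Bounded velocities give bounded displacement
   increments, and a right inverse of the full-row-rank [C] recovers the
   multiplier increments from the equilibrium equations. *)

Lemma discriminant_le (R : realFieldType) (a b c : R) : 0 <= c ->
  (forall t : R, 0 <= a + 2 * t * b + t ^+ 2 * c) -> b ^+ 2 <= a * c.
Proof.
move=> c_ge0 nonneg; have [c0|c_neq0] := eqVneq c 0.
  subst c; have [->|b_neq0] := eqVneq b 0; first by rewrite expr0n mulr0.
  have := nonneg (- (a + 1) / (2 * b)); rewrite mulr0 addr0.
  have -> : 2 * (- (a + 1) / (2 * b)) * b = - (a + 1) by field.
  lra.
have c_gt0 : 0 < c by rewrite lt_def c_neq0 c_ge0.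
have := nonneg (- b / c).
have -> : a + 2 * (- b / c) * b + (- b / c) ^+ 2 * c = a - b ^+ 2 / c by field.
by rewrite subr_ge0 ler_pdivrMr.
Qed.

Section QuadraticForms.
Variables (R : realType) (n : nat).
Implicit Types (B : 'M[R]_n) (x y z : 'cV[R]_n).

Definition bform B x y : R := (x^T *m B *m y) ord0 ord0.
Definition qform B x : R := bform B x x.

Lemma bformDr B x y z : bform B x (y + z) = bform B x y + bform B x z.
Proof. by rewrite /bform mulmxDr mxE. Qed.

Lemma bformZr B x (a : R) y : bform B x (a *: y) = a * bform B x y.
Proof. by rewrite /bform -scalemxAr mxE. Qed.

Lemma bformNr B x y : bform B x (- y) = - bform B x y.
Proof. by rewrite -scaleN1r bformZr mulN1r. Qed.

Lemma bformBr B x y z : bform B x (y - z) = bform B x y - bform B x z.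
Proof. by rewrite bformDr bformNr. Qed.

Lemma bformDl B x y z : bform B (x + y) z = bform B x z + bform B y z.
Proof. by rewrite /bform raddfD /= !mulmxDl mxE. Qed.

Lemma bformZl B (a : R) x y : bform B (a *: x) y = a * bform B x y.
Proof. by rewrite /bform linearZ /= -!scalemxAl mxE. Qed.

Lemma bform0l B x : bform B 0 x = 0.
Proof. by rewrite /bform trmx0 !mul0mx mxE. Qed.

Lemma bformBmx B B' x y : bform (B - B') x y = bform B x y - bform B' x y.
Proof. by rewrite /bform mulmxBr mulmxBl !mxE. Qed.

Lemma bformZmx B (a : R) x y : bform (a *: B) x y = a * bform B x y.
Proof. by rewrite /bform -scalemxAr -scalemxAl mxE. Qed.

Lemma bformC B x y : sym_mx B -> bform B x y = bform B y x.
Proof.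
move=> symB; rewrite /bform.
have -> : (x^T *m B *m y) ord0 ord0 = (x^T *m B *m y)^T ord0 ord0 by rewrite [in RHS]mxE.
by rewrite !trmx_mul trmxK symB mulmxA.
Qed.

Lemma bform_delta_mx B k x : bform B (delta_mx k ord0) x = (B *m x) k ord0.
Proof. by rewrite /bform -mulmxA trmx_delta -rowE mxE. Qed.

Lemma qformZ B (a : R) x : qform B (a *: x) = a ^+ 2 * qform B x.
Proof. by rewrite /qform bformZl bformZr mulrA expr2. Qed.

Lemma qformD B x y : sym_mx B ->
  qform B (x + y) = qform B x + 2 * bform B x y + qform B y.
Proof. by move=> symB; rewrite /qform !(bformDl, bformDr) (bformC y x symB); ring. Qed.

Lemma qform_mx1 x k : (x k ord0) ^+ 2 <= qform 1%:M x.
Proof.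
rewrite /qform /bform mulmx1 mxE (bigD1 k) //= mxE -expr2 lerDl.
by apply: sumr_ge0 => j _; rewrite mxE -expr2 sqr_ge0.
Qed.

Section Semidefinite.
Variable B : 'M[R]_n.
Hypothesis psdB : spsd_mx B.

Lemma qform_ge0 x : 0 <= qform B x.
Proof. by have [_] := psdB; apply. Qed.

Lemma bform_sqr_le x y : bform B x y ^+ 2 <= qform B x * qform B y.
Proof.
have symB : sym_mx B by case: psdB.
apply: discriminant_le => [|t]; first exact: qform_ge0.
by have := qform_ge0 (x + t *: y); rewrite qformD // qformZ bformZr; lra.
Qed.

Lemma qform_eq0_mulmx x : qform B x = 0 -> B *m x = 0.
Proof.
move=> Bx0; apply/matrixP => k j; rewrite (ord1 j) [RHS]mxE.
have := bform_sqr_le (delta_mx k ord0) x; rewrite Bx0 mulr0 bform_delta_mx.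
by move=> le0; apply/eqP; rewrite -sqrf_eq0 eq_le le0 sqr_ge0.
Qed.

Lemma bform_eq0_qform_eq0 x y : qform B x = 0 -> bform B x y = 0.
Proof.
move=> Bx0; have := bform_sqr_le x y; rewrite Bx0 mul0r.
by move=> le0; apply/eqP; rewrite -sqrf_eq0 eq_le le0 sqr_ge0.
Qed.

Lemma qformB_le x y : qform B (x - y) <= 2 * qform B x + 2 * qform B y.
Proof.
have symB : sym_mx B by case: psdB.
have := qform_ge0 (x + y); rewrite -scaleN1r !qformD // bformZr qformZ; lra.
Qed.

Lemma qform_convex (g : R) x y : 0 <= g <= 1 ->
  qform B ((1 - g) *: x + g *: y) <= qform B x + qform B y.
Proof.
have symB : sym_mx B by case: psdB.
move=> /andP[g_ge0 g_le1]; have := qform_ge0 (x + (-1) *: y).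
rewrite !qformD // !qformZ !bformZl !bformZr.
have := qform_ge0 x; have := qform_ge0 y; have : 0 <= (1 - g) * g by nra.
nra.
Qed.

End Semidefinite.

Lemma spd_spsd B : spd_mx B -> spsd_mx B.
Proof.
move=> [symB posB]; split=> // x; have [->|x_neq0] := eqVneq x 0.
  by rewrite trmx0 !mul0mx mxE.
exact/ltW/posB.
Qed.

Lemma qform_gt0 B x : spd_mx B -> x != 0 -> 0 < qform B x.
Proof. by case=> _; apply. Qed.

End QuadraticForms.

Import numFieldNormedType.Exports.
Local Open Scope classical_set_scope.

Lemma continuous_sum (R : realType) (T : topologicalType) (I : Type) (r : seq I)
  (F : I -> T -> R) : (forall i, continuous (F i)) ->
  continuous (fun x => \sum_(i <- r) F i x).
Proof.
move=> contF x; apply: cvg_big => [|i _]; last exact: contF.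
exact: add_continuous.
Qed.

Lemma qform_trmx_continuous (R : realType) n (B : 'M[R]_n) :
  continuous (fun u : 'rV[R]_n => qform B u^T).
Proof.
have qformE (u : 'rV[R]_n) : qform B u^T = \sum_k (\sum_j u ord0 j * B j k) * u ord0 k.
  by rewrite /qform /bform trmxK mxE; apply: eq_bigr => k _; rewrite !mxE.
under eq_fun do rewrite qformE.
apply: continuous_sum => k u; apply: continuousM; last exact: coord_continuous.
apply: continuous_sum => j w; apply: continuousM; first exact: coord_continuous.
exact: cst_continuous.
Qed.

Lemma unit_sphere_compact (R : realType) n : compact [set u : 'rV[R]_n | `|u| = 1].
Proof.
apply: bounded_closed_compact.
  rewrite /= /bounded_near; near=> r => u /= ->.
  near: r; apply: nbhs_pinfty_ge; exact: num_real.
apply: (@preimage_closed _ _ (fun u : 'rV[R]_n => `|u| : R) (fun r => r = 1)).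
  by move=> u _; exact: norm_continuous.
exact: closed_eq.
Unshelve. all: by end_near.
Qed.

Lemma cV_dim0_eq0 (R : nmodType) n (x : 'cV[R]_n) : n = 0%N -> x = 0.
Proof. by move=> n0; apply/matrixP => i; suff : (i < 0)%N by []; rewrite -n0. Qed.

Section Rayleigh.
Variables (R : realType) (n : nat) (K M : 'M[R]_n).
Hypotheses (symK : sym_mx K) (pdM : spd_mx M).

Lemma rayleigh_maximizer_eigen (mu : R) x : x != 0 ->
  (forall y, qform K y <= mu * qform M y) -> qform K x = mu * qform M x ->
  gen_eigenvalue K M mu.
Proof.
move=> x_neq0 bound eqx; exists x; split=> //.
(* [mu M - K] is positive semidefinite and its form vanishes at [x],
   so [x] lies in its kernel. *)
have psdB : spsd_mx (mu *: M - K).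
  split; first by rewrite /sym_mx linearB /= linearZ /= symK; case: pdM => ->.
  move=> y; change (0 <= bform (mu *: M - K) y y).
  by rewrite bformBmx bformZmx subr_ge0; apply: bound.
have Bx0 : qform (mu *: M - K) x = 0.
  by rewrite /qform bformBmx bformZmx -/(qform K x) -/(qform M x) eqx subrr.
have /eqP := qform_eq0_mulmx psdB Bx0.
by rewrite mulmxBl -scalemxAl subr_eq0 => /eqP.
Qed.

Lemma rayleigh_max_gen_eigenvalue : (0 < n)%N ->
  exists mu, gen_eigenvalue K M mu /\ forall x, qform K x <= mu * qform M x.
Proof.
move=> n_gt0; pose A := [set u : 'rV[R]_n | `|u| = 1].
pose f u := qform K u^T / qform M u^T.
have A_neq0 u : A u -> u^T != 0.
  rewrite /A /= trmx_eq0 => u1; apply: contra_eq_neq u1 => ->.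
  by rewrite normr0 eq_sym oner_neq0.
have A_normalize (u : 'rV[R]_n) : u != 0 -> A (`|u|^-1 *: u).
  by move=> u_neq0; rewrite /A /= normrZ normfV normr_id mulVf ?normr_eq0.
have [c Ac cmax] : exists2 c, c \in A & forall u, u \in A -> f u <= f c.
  apply: EVT_max_rV; last first.
  - apply: continuous_in_subspaceT => u; rewrite inE => Au.
    apply: (@continuousM _ _ (fun u => qform K u^T) (fun u => (qform M u^T)^-1)).
      exact: qform_trmx_continuous.
    apply: continuousV; first by rewrite gt_eqF // (qform_gt0 pdM) // A_neq0.
    exact: qform_trmx_continuous.
  - exact: unit_sphere_compact.
  pose u1 := const_mx 1 : 'rV[R]_n; exists (`|u1|^-1 *: u1); apply: A_normalize.
  by apply/eqP => /matrixP/(_ ord0 (Ordinal n_gt0)); rewrite !mxE => /eqP; rewrite oner_eq0.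
rewrite inE in Ac; have cM_gt0 := qform_gt0 pdM (A_neq0 _ Ac).
have bound x : qform K x <= f c * qform M x.
  have [->|x_neq0] := eqVneq x 0; first by rewrite /qform !bform0l mulr0.
  have xM_gt0 := qform_gt0 pdM x_neq0; rewrite -ler_pdivrMr //.
  have xT_neq0 : x^T != 0 by rewrite trmx_eq0.
  have scale_neq0 : `|x^T|^-1 ^+ 2 != 0 by rewrite sqrf_eq0 invr_eq0 normr_eq0.
  have := cmax _ (mem_set (A_normalize _ xT_neq0)).
  by rewrite /f linearZ /= trmxK !qformZ -mulf_div divff ?mul1r.
exists (f c); split=> //; apply: (rayleigh_maximizer_eigen (A_neq0 _ Ac) bound).
by rewrite /f divfK // gt_eqF.
Qed.

Lemma rayleigh_bounded : exists mu, forall x, qform K x <= mu * qform M x.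
Proof.
have [n0|n_gt0] := posnP n; last first.
  by have [mu [_ bound]] := rayleigh_max_gen_eigenvalue n_gt0; exists mu.
exists 0 => x; suff -> : x = 0 by rewrite /qform bform0l mul0r.
exact: cV_dim0_eq0.
Qed.

Lemma largest_gen_eigenvalue_rayleigh w : largest_gen_eigenvalue K M w ->
  forall x, qform K x <= w * qform M x.
Proof.
move=> [[phi [phi_neq0 _]] wmax] x.
have n_gt0 : (0 < n)%N.
  by rewrite lt0n; apply: contra_neq phi_neq0; exact: cV_dim0_eq0.
have [mu [mu_eigen bound]] := rayleigh_max_gen_eigenvalue n_gt0.
apply: le_trans (bound x) _; apply: ler_wpM2r; last exact: wmax _ mu_eigen.
exact/qform_ge0/spd_spsd.
Qed.

End Rayleigh.

Lemma coord_sqr_le_qform (R : realType) n (M : 'M[R]_n) : spd_mx M ->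
  exists c, 0 <= c /\ forall (x : 'cV[R]_n) k, (x k ord0) ^+ 2 <= c * qform M x.
Proof.
move=> pdM; have [mu bound] := rayleigh_bounded (trmx1 R n) pdM.
exists (Num.max mu 0); split=> [|x k]; first by rewrite le_max lexx orbT.
apply: le_trans (qform_mx1 x k) (le_trans (bound x) _).
by apply: ler_wpM2r; [exact/qform_ge0/spd_spsd | rewrite le_max lexx].
Qed.

Local Close Scope classical_set_scope.

Section ScalarInequalities.
Variable R : realFieldType.

Lemma split_sqr_bound (k al t P Q a b w : R) : 0 < k -> 0 < al ->
  t = 1 - k * al -> 0 < t -> 0 <= P -> 0 <= Q -> 0 <= w ->
  a ^+ 2 <= t / k * P * Q -> b ^+ 2 <= w * P -> P + a = b ->
  k * P - Q <= w / al.
Proof.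
move=> k_gt0 al_gt0 tE t_gt0 P_ge0 Q_ge0 w_ge0 a_le b_le Pab.
have [->|P_neq0] := eqVneq P 0.
  by have := divr_ge0 w_ge0 (ltW al_gt0); rewrite mulr0 sub0r; lra.
have P_gt0 : 0 < P by rewrite lt_def P_neq0 P_ge0.
pose s := k * al; have s_gt0 : 0 < s by rewrite mulr_gt0.
(* Weighted Cauchy-Schwarz for [P = b - a], with weights [t + s = 1]. *)
have split_sqr : P ^+ 2 <= a ^+ 2 / t + b ^+ 2 / s.
  have -> : P = b - a by rewrite -Pab; ring.
  rewrite -subr_ge0.
  have -> : a ^+ 2 / t + b ^+ 2 / s - (b - a) ^+ 2 = (s * a + t * b) ^+ 2 / (t * s).
    by rewrite tE /s; field; rewrite !gt_eqF // -tE.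
  by rewrite divr_ge0 ?sqr_ge0 // mulr_ge0 // ltW.
have a_term : a ^+ 2 / t <= P * Q / k.
  rewrite ler_pdivrMr //; apply: le_trans a_le _.
  by rewrite le_eqVlt; apply/orP; left; apply/eqP; ring.
have b_term : b ^+ 2 / s <= w * P / s by rewrite ler_pM2r ?invr_gt0.
have : P <= Q / k + w / s.
  rewrite -(ler_pM2l P_gt0) -expr2; apply: le_trans split_sqr _.
  apply: le_trans (lerD a_term b_term) _; rewrite le_eqVlt; apply/orP; left.
  by apply/eqP; field; rewrite !gt_eqF.
rewrite -(ler_pM2l k_gt0).
have -> : k * (Q / k + w / s) = Q + w / al by rewrite /s; field; rewrite !gt_eqF.
lra.
Qed.

Lemma geometric_increments_le (E : nat -> R) (q c : R) N : 0 <= q < 1 -> 0 <= c ->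
  (forall k, (k < N)%N -> E k.+1 <= E k + q ^+ k * c) -> E N <= E 0 + c / (1 - q).
Proof.
move=> /andP[q_ge0 q_lt1] c_ge0 incr; have q1_gt0 : 0 < 1 - q by lra.
suff : (1 - q) * E N <= (1 - q) * E 0 + c * (1 - q ^+ N).
  move=> bound; rewrite -(ler_pM2l q1_gt0) mulrDr mulrCA divff ?gt_eqF // mulr1.
  have := exprn_ge0 N q_ge0; nra.
elim: N incr => [|N IH] incr; first by rewrite expr0; lra.
have := IH (fun k lt_kN => incr k (ltnW lt_kN)); have := incr N (ltnSn N).
have := exprn_ge0 N q_ge0; rewrite exprS; nra.
Qed.

Lemma normr_le_amgm (x a : R) : 0 < a -> `|x| <= x ^+ 2 / (2 * a) + a / 2.
Proof.
move=> a_gt0; have a2_gt0 : 0 < 2 * a by rewrite mulr_gt0.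
rewrite -[x ^+ 2]real_normK ?num_real // -(ler_pM2l a2_gt0).
have -> : 2 * a * (`|x| ^+ 2 / (2 * a) + a / 2) = `|x| ^+ 2 + a ^+ 2.
  by field; rewrite gt_eqF.
have := sqr_ge0 (`|x| - a); nra.
Qed.

Lemma bounded_of_geometric_perturbation (E : nat -> R) (q c0 c1 c2 : R) :
  0 <= q < 1 -> 0 <= c0 -> 0 <= c1 -> 0 <= c2 -> (forall n, 0 <= E n) ->
  (forall n, exists ph : R, ph ^+ 2 <= c2 * (E n + E n.+1) /\
                           E n.+1 <= E n + q ^+ n * (c0 + c1 * `|ph|)) ->
  exists T, forall n, E n <= T.
Proof.
move=> q01 c0_ge0 c1_ge0 c2_ge0 E_ge0 incr; have /andP[q_ge0 q_lt1] := q01.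
have q1_gt0 : 0 < 1 - q by lra.
(* [a] makes the [E]-dependent part of the increments at most half of [E]. *)
pose a := 2 * c1 * c2 / (1 - q) + 1.
have a_gt0 : 0 < a.
  have : 0 <= 2 * c1 * c2 / (1 - q) by rewrite divr_ge0 ?mulr_ge0 // ltW.
  rewrite /a; lra.
have absorb : c1 * c2 / (a * (1 - q)) <= 1 / 2.
  rewrite ler_pdivrMr ?mulr_gt0 //.
  have -> : a * (1 - q) = 2 * c1 * c2 + (1 - q) by rewrite /a; field; rewrite gt_eqF.
  lra.
pose T0 := E 0 + (c0 + c1 * a / 2) / (1 - q).
exists (2 * T0); elim/ltn_ind => N IH.
pose X := Num.max (2 * T0) (E N).
have E_le_X k : (k <= N)%N -> E k <= X.
  rewrite leq_eqVlt => /orP[/eqP->|lt_kN]; first by rewrite le_max lexx orbT.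
  by rewrite le_max IH.
have X_ge0 : 0 <= X := le_trans (E_ge0 N) (E_le_X N (leqnn N)).
pose K0 := c0 + c1 * (c2 * X / a + a / 2).
have K0_ge0 : 0 <= K0.
  by rewrite addr_ge0 // mulr_ge0 // addr_ge0 // divr_ge0 ?mulr_ge0 // ltW.
have step k : (k < N)%N -> E k.+1 <= E k + q ^+ k * K0.
  move=> lt_kN; have [ph [ph_le incr_k]] := incr k.
  apply: le_trans incr_k _; rewrite lerD2l ler_wpM2l ?exprn_ge0 // lerD2l ler_wpM2l //.
  apply: le_trans (normr_le_amgm ph a_gt0) _; rewrite lerD2r ler_pdivrMr ?mulr_gt0 //.
  have -> : c2 * X / a * (2 * a) = c2 * (2 * X) by field; rewrite gt_eqF.
  apply: le_trans ph_le _; apply: ler_wpM2l => //.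
  by have := E_le_X k (ltnW lt_kN); have := E_le_X k.+1 lt_kN; lra.
have := geometric_increments_le q01 K0_ge0 step.
have -> : E 0 + K0 / (1 - q) = T0 + c1 * c2 / (a * (1 - q)) * X.
  by rewrite /T0 /K0; field; rewrite !gt_eqF.
have := ler_wpM2r X_ge0 absorb; have [//|lt_T0] := leP (E N) (2 * T0).
have -> : X = E N by rewrite /X max_r // ltW.
lra.
Qed.

End ScalarInequalities.

Section BoundedSequences.
Variables (R : realType) (a b : nat).
Implicit Types (x y : nat -> 'M[R]_(a, b)).

Lemma eq_bounded_seq x y : (forall n, x n = y n) -> bounded_seq x -> bounded_seq y.
Proof. by move=> xy [c xc]; exists c => n i j; rewrite -xy. Qed.

Lemma bounded_seq_shift x : bounded_seq x -> bounded_seq (fun n => x n.+1).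
Proof. by move=> [c xc]; exists c. Qed.

Lemma bounded_seqN x : bounded_seq x -> bounded_seq (fun n => - x n).
Proof. by move=> [c xc]; exists c => n i j; rewrite mxE normrN. Qed.

Lemma bounded_seqD x y :
  bounded_seq x -> bounded_seq y -> bounded_seq (fun n => x n + y n).
Proof.
move=> [c xc] [c' yc']; exists (c + c') => n i j; rewrite mxE.
exact: le_lt_trans (ler_normD _ _) (ltrD (xc n i j) (yc' n i j)).
Qed.

Lemma bounded_seqZ (k : R) x : bounded_seq x -> bounded_seq (fun n => k *: x n).
Proof.
move=> [c xc]; exists (`|k| * Num.max c 0 + 1) => n i j; rewrite mxE normrM ltr_pwDr //.
by rewrite ler_wpM2l // le_max (ltW (xc n i j)).
Qed.

Lemma bounded_seq_mull c (A : 'M[R]_(c, a)) x :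
  bounded_seq x -> bounded_seq (fun n => A *m x n).
Proof.
move=> [c0 xc0]; pose B := Num.max c0 0.
have xB n k l : `|x n k l| <= B by rewrite le_max (ltW (xc0 n k l)).
exists (\sum_i \sum_k `|A i k| * B + 1) => n i j; rewrite mxE ltr_pwDr //.
apply: le_trans (ler_norm_sum _ _ _) (le_trans (_ : _ <= \sum_k `|A i k| * B) _).
  by apply: ler_sum => k _; rewrite normrM ler_wpM2l.
rewrite (bigD1 i) //= lerDl sumr_ge0 // => i' _.
by rewrite sumr_ge0 // => k _; rewrite mulr_ge0 // le_max lexx orbT.
Qed.

Lemma bounded_seq_geom (r : R) (A : 'M[R]_(a, b)) :
  `|r| <= 1 -> bounded_seq (fun n => r ^+ n *: A).
Proof.
move=> r_le1; exists (\sum_i \sum_j `|A i j| + 1) => n i j.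
rewrite mxE normrM normrX ltr_pwDr //; apply: (@le_trans _ _ `|A i j|).
  by rewrite ler_piMl // exprn_ile1.
rewrite (bigD1 i) //= (bigD1 j) //= -addrA lerDl addr_ge0 // sumr_ge0 // => *.
exact: sumr_ge0.
Qed.

End BoundedSequences.

Lemma bounded_seq_qform (R : realType) n (M : 'M[R]_n) (x : nat -> 'cV[R]_n) :
  spd_mx M -> (exists T, forall k, qform M (x k) <= T) -> bounded_seq x.
Proof.
move=> pdM [T xT]; have [c [c_ge0 coord_le]] := coord_sqr_le_qform pdM.
exists (2 + c * Num.max T 0) => k i j; rewrite (ord1 j).
have := coord_le (x k) i; have : c * qform M (x k) <= c * Num.max T 0.
  by rewrite ler_wpM2l // le_max xT.
have : `|x k i ord0| <= 1 + (x k i ord0) ^+ 2.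
  by rewrite -real_normK ?num_real //; have := sqr_ge0 (`|x k i ord0| - 1); nra.
lra.
Qed.

Definition baumgarte_ratio (R : realFieldType) (gamma alpha : R) : R :=
  (1 - alpha * (1 - gamma)) / (1 + alpha * gamma).

Section BaumgarteRatio.
Variables (R : realFieldType) (gamma alpha : R).

Lemma baumgarte_denom_gt0 : 0 <= gamma -> 0 < alpha -> 0 < 1 + alpha * gamma.
Proof. by move=> gamma_ge0 alpha_gt0; have := mulr_ge0 (ltW alpha_gt0) gamma_ge0; lra. Qed.

Lemma baumgarte_ratioE : 0 <= gamma -> 0 < alpha ->
  baumgarte_ratio gamma alpha * (1 + alpha * gamma) = 1 - alpha * (1 - gamma).
Proof. by move=> gamma_ge0 alpha_gt0; rewrite divfK // gt_eqF // baumgarte_denom_gt0. Qed.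

Lemma baumgarte_ratio_le1 : 0 <= gamma -> 0 < alpha -> alpha * (1 - 2 * gamma) <= 2 ->
  `|baumgarte_ratio gamma alpha| <= 1.
Proof.
move=> gamma_ge0 alpha_gt0 stable.
have denom_gt0 := baumgarte_denom_gt0 gamma_ge0 alpha_gt0.
by rewrite ler_norml ler_pdivlMr ?ler_pdivrMr //; apply/andP; split; lra.
Qed.

Lemma baumgarte_ratio_lt1 : 0 <= gamma -> 0 < alpha -> alpha * (1 - 2 * gamma) < 2 ->
  `|baumgarte_ratio gamma alpha| < 1.
Proof.
move=> gamma_ge0 alpha_gt0 stable.
have denom_gt0 := baumgarte_denom_gt0 gamma_ge0 alpha_gt0.
by rewrite ltr_norml ltr_pdivlMr ?ltr_pdivrMr //; apply/andP; split; lra.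
Qed.

End BaumgarteRatio.

Section BaumgarteScheme.
Variables (R : realType) (N p : nat) (M K : 'M[R]_N) (C : 'M[R]_(p, N)).
Variables (gamma dt alpha : R) (v d : nat -> 'cV[R]_N) (lam : nat -> 'cV[R]_p).
Hypotheses (gamma_ge0 : 0 <= gamma) (dt_gt0 : 0 < dt) (alpha_gt0 : 0 < alpha).
Hypothesis equilibrium : forall n, M *m v n + K *m d n = C^T *m lam n.
Hypothesis baumgarte : forall n, C *m v n + (alpha / dt) *: (C *m d n) = 0.
Hypothesis newmark :
  forall n, d n.+1 = d n + dt *: ((1 - gamma) *: v n + gamma *: v n.+1).

Local Notation r := (baumgarte_ratio gamma alpha).

Lemma constraint_velocity n : C *m v n = - (alpha / dt) *: (C *m d n).
Proof. by apply/eqP; rewrite scaleNr -addr_eq0 baumgarte. Qed.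

Lemma constraint_drift n : C *m d n = r ^+ n *: (C *m d 0).
Proof.
elim: n => [|n IH]; first by rewrite expr0 scale1r.
have := congr1 (mulmx C) (newmark n).
rewrite mulmxDr -scalemxAr mulmxDr -!scalemxAr !constraint_velocity exprS -scalerA -IH.
move: (C *m d n) (C *m d n.+1) => x y eq_y; apply/matrixP => i j.
move/matrixP/(_ i j): eq_y; rewrite !mxE => eq_yij.
have denom_gt0 := baumgarte_denom_gt0 gamma_ge0 alpha_gt0.
apply: (mulIf (lt0r_neq0 denom_gt0)); rewrite mulrAC baumgarte_ratioE //.
have -> : y i j * (1 + alpha * gamma) = y i j + alpha * gamma * y i j by ring.
by rewrite {1}eq_yij; field; rewrite gt_eqF.
Qed.

Definition corrected_velocity n := v n + (alpha / dt * r ^+ n) *: d 0.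

Definition averaged_velocity n :=
  (1 - gamma) *: corrected_velocity n + gamma *: corrected_velocity n.+1.

Definition correction_load y := alpha / dt * bform M y (d 0) - bform K y (d 0).

Local Notation V := corrected_velocity.

Lemma corrected_velocity_ker n : C *m V n = 0.
Proof.
rewrite mulmxDr -scalemxAr constraint_velocity (constraint_drift n) !scalerA.
by rewrite -scalerDl mulNr addNr scale0r.
Qed.

Lemma equilibrium_ker n y : C *m y = 0 -> bform M y (v n) + bform K y (d n) = 0.
Proof.
move=> Cy0; have := congr1 (mulmx y^T) (equilibrium n).
rewrite mulmxDr !mulmxA -trmx_mul Cy0 trmx0 !mul0mx => /matrixP/(_ ord0 ord0).
by rewrite [RHS]mxE mxE.
Qed.

Lemma energy_identity n y : C *m y = 0 ->
  bform M y (V n.+1 - V n) + dt * bform K y (averaged_velocity n)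
  = (r - 1) * r ^+ n * correction_load y.
Proof.
move=> Cy0; have eq_n := equilibrium_ker n Cy0; have := equilibrium_ker n.+1 Cy0.
rewrite newmark !(bformDr, bformZr) => eq_n1.
have denom_gt0 := baumgarte_denom_gt0 gamma_ge0 alpha_gt0.
have rE : r = (1 - alpha * (1 - gamma)) / (1 + alpha * gamma) by [].
rewrite /averaged_velocity /corrected_velocity /correction_load.
rewrite !(bformDr, bformNr, bformZr) exprS rE.
move: eq_n eq_n1; set Mv := bform M y (v n); set Mv1 := bform M y (v n.+1).
set Kd := bform K y (d n) => eq_n eq_n1.
have -> : Mv1 = - (Kd + dt * ((1 - gamma) * bform K y (v n) + gamma * bform K y (v n.+1))).
  by lra.
have -> : Mv = - Kd by lra.
by field; rewrite !gt_eqF.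
Qed.

Section Stability.
Hypotheses (pdM : spd_mx M) (psdK : spsd_mx K) (gamma_le1 : gamma <= 1).
Hypothesis stable : 1 / 2 <= gamma \/ (gamma < 1 / 2 /\ alpha * (1 - 2 * gamma) <= 2 /\
  forall x, dt * qform K x <= (2 / (1 - 2 * gamma) - alpha) * qform M x).

Lemma stable_ratio_le1 : `|r| <= 1.
Proof.
apply: baumgarte_ratio_le1 => //.
case: stable => [gamma_ge_half|[_ [? _]]] //.
by have := alpha_gt0; nra.
Qed.

Lemma correction_sqr_le n : (alpha / dt * r ^+ n) ^+ 2 <= (alpha / dt) ^+ 2.
Proof.
rewrite exprMn ler_piMr ?sqr_ge0 // -exprM mulnC exprM -[r ^+ 2]real_normK ?num_real //.
by rewrite exprn_ile1 ?sqr_ge0 // expr_le1 ?stable_ratio_le1.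
Qed.

Lemma correction_load_sqr_le :
  exists2 c, 0 <= c & forall y, correction_load y ^+ 2 <= c * qform M y.
Proof.
have [symK _] := psdK; have psdM := spd_spsd pdM.
have [W KW] := rayleigh_bounded symK pdM; set W' := Num.max W 0.
have W'_ge0 : 0 <= W' by rewrite le_max lexx orbT.
have KW' y : qform K y <= W' * qform M y.
  by apply: le_trans (KW y) _; rewrite ler_wpM2r ?le_max ?lexx ?qform_ge0.
set z := d 0; set a := alpha / dt.
exists (2 * a ^+ 2 * qform M z + 2 * W' * qform K z) => [|y].
  by have := qform_ge0 psdM z; have := qform_ge0 psdK z; have := sqr_ge0 a; nra.
have := bform_sqr_le psdM y z; have := bform_sqr_le psdK y z; have := KW' y.
have := qform_ge0 psdM y; have := qform_ge0 psdM z; have := qform_ge0 psdK z.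
have := sqr_ge0 a; have := sqr_ge0 (a * bform M y z + bform K y z).
rewrite /correction_load -/z -/a; nra.
Qed.

Lemma qformK_eq0_critical : alpha * (1 - 2 * gamma) = 2 -> forall x, qform K x = 0.
Proof.
move=> critical x; have := qform_ge0 psdK x.
case: stable => [gamma_ge_half|[_ [_ dtK_le]]].
  by have := alpha_gt0; nra.
have := dtK_le x.
have -> : 2 / (1 - 2 * gamma) - alpha = (2 - alpha * (1 - 2 * gamma)) / (1 - 2 * gamma).
  by field; apply/eqP => den0; move: critical; rewrite den0 mulr0; lra.
by rewrite critical subrr !mul0r pmulr_rle0 //; lra.
Qed.

Lemma corrected_energy_bounded_critical : alpha * (1 - 2 * gamma) = 2 ->
  exists T, forall n, qform M (V n) <= T.
Proof.
move=> critical; have psdM := spd_spsd pdM; set z := d 0.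
exists ((alpha / dt) ^+ 2 * qform M z) => n.
(* With [K = 0], testing with [V n] gives [|V n|_M^2 = c_n (V n, d 0)_M]. *)
have := equilibrium_ker n (corrected_velocity_ker n).
have vE : v n = V n - (alpha / dt * r ^+ n) *: z by rewrite addrK.
rewrite (bform_eq0_qform_eq0 psdK _ (qformK_eq0_critical critical _)) addr0.
rewrite vE bformBr bformZr => /eqP; rewrite subr_eq0 => /eqP energyE.
have := bform_sqr_le psdM (V n) z; have := correction_sqr_le n.
have := qform_ge0 psdM (V n); have := qform_ge0 psdM z.
rewrite -/(qform M (V n)) in energyE *; move: energyE.
set E := qform M (V n); set c := alpha / dt * r ^+ n; set b := bform M (V n) z.
move=> energyE qz_ge0 E_ge0 c_le b_le.
have [E0|E_neq0] := eqVneq E 0; first by rewrite E0 mulr_ge0 ?sqr_ge0.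
have E_gt0 : 0 < E by rewrite lt_def E_neq0.
have : E ^+ 2 <= c ^+ 2 * (E * qform M z).
  by rewrite {1}energyE exprMn ler_wpM2l ?sqr_ge0.
move/le_trans/(_ (ler_wpM2r (mulr_ge0 E_ge0 qz_ge0) c_le)).
by rewrite mulrCA expr2 ler_pM2l.
Qed.

Section Subcritical.
Variable c : R.
Hypotheses (c_ge0 : 0 <= c)
  (load_le : forall y, correction_load y ^+ 2 <= c * qform M y).
Hypothesis subcritical : alpha * (1 - 2 * gamma) < 2.

Lemma corrected_energy_step n : qform M (V n.+1) <= qform M (V n)
  + 2 * (((r - 1) * r ^+ n) ^+ 2 * c / alpha
         + (r - 1) * r ^+ n * correction_load (averaged_velocity n)).
Proof.
(* Testing with [U] gives [E_(n+1) - E_n = 2 ((1/2 - gamma) P - Q + rho load U)]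
   for [P = |Dv|_M^2] and [Q = dt |U|_K^2]; testing with [Dv] controls the
   first two terms. *)
set rho := (r - 1) * r ^+ n; have psdM := spd_spsd pdM; have [symM _] := psdM.
pose Dv := V n.+1 - V n; pose U := averaged_velocity n.
have kerD : C *m Dv = 0 by rewrite mulmxBr !corrected_velocity_ker subr0.
have kerU : C *m U = 0.
  by rewrite mulmxDr -!scalemxAr !corrected_velocity_ker !scaler0 addr0.
have idU := energy_identity n kerU; have idD := energy_identity n kerD.
rewrite -/Dv -/U -/(qform K U) in idU idD *; rewrite -/rho in idU idD.
have energyE : qform M (V n.+1) = qform M (V n) + 2 * bform M (V n) Dv + qform M Dv.
  by rewrite -qformD // addrC subrK.
have bformU : bform M U Dv = bform M (V n) Dv + gamma * qform M Dv.
  suff -> : U = V n + gamma *: Dv by rewrite bformDl bformZl.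
  by apply/matrixP => i j; rewrite !mxE; ring.
have P_ge0 := qform_ge0 psdM Dv; have Q_ge0 := qform_ge0 psdK U.
have Q'_ge0 : 0 <= dt * qform K U by rewrite mulr_ge0 // ltW.
have rc_ge0 : 0 <= rho ^+ 2 * c / alpha.
  by rewrite divr_ge0 ?(ltW alpha_gt0) // mulr_ge0 // sqr_ge0.
suff : (1 / 2 - gamma) * qform M Dv - dt * qform K U <= rho ^+ 2 * c / alpha.
  by rewrite energyE; move: idU; rewrite bformU; lra.
case: stable => [gamma_ge_half|[gamma_lt_half [_ dtK_le]]].
  have : (1 / 2 - gamma) * qform M Dv <= 0 by apply: mulr_le0_ge0 => //; lra.
  lra.
pose k := 1 / 2 - gamma; have k_gt0 : 0 < k by rewrite /k; lra.
have t_gt0 : 0 < 1 - k * alpha by have := subcritical; rewrite /k; lra.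
apply: (split_sqr_bound k_gt0 alpha_gt0 erefl t_gt0 P_ge0 Q'_ge0 (mulr_ge0 (sqr_ge0 rho) c_ge0)
  _ _ idD).
- have coefE : 2 / (1 - 2 * gamma) - alpha = (1 - k * alpha) / k.
    by rewrite /k; field; apply/eqP; lra.
  have dtK_le' := dtK_le Dv; rewrite coefE in dtK_le'.
  rewrite exprMn; apply: le_trans (ler_wpM2l (sqr_ge0 dt) (bform_sqr_le psdK Dv U)) _.
  have -> : dt ^+ 2 * (qform K Dv * qform K U) = dt * qform K Dv * (dt * qform K U).
    by ring.
  exact: ler_wpM2r.
- by rewrite exprMn -[_ * c * _]mulrA; apply: ler_wpM2l; [exact: sqr_ge0 | exact: load_le].
Qed.

Lemma corrected_energy_bounded_subcritical : exists T, forall n, qform M (V n) <= T.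
Proof.
have psdM := spd_spsd pdM.
have r_lt1 := baumgarte_ratio_lt1 gamma_ge0 alpha_gt0 subcritical.
have c_alpha_ge0 : 0 <= c / alpha by rewrite divr_ge0 // ltW.
apply: (@bounded_of_geometric_perturbation _ _ `|r|
  (2 * (r - 1) ^+ 2 * (c / alpha)) (2 * `|r - 1|) c) => //.
- by rewrite normr_ge0 r_lt1.
- by rewrite mulr_ge0 // mulr_ge0 // sqr_ge0.
- by rewrite mulr_ge0.
- by move=> n; exact: qform_ge0.
move=> n; exists (correction_load (averaged_velocity n)); split.
  apply: le_trans (load_le _) (ler_wpM2l c_ge0 _).
  by apply: qform_convex => //; apply/andP.
apply: le_trans (corrected_energy_step n) _; rewrite lerD2l.
set L := correction_load _.
have rn_ge0 := exprn_ge0 n (normr_ge0 r).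
have rn_le1 : `|r| ^+ n <= 1 by rewrite exprn_ile1 // ltW.
have quad_le : ((r - 1) * r ^+ n) ^+ 2 * c / alpha <= (r - 1) ^+ 2 * `|r| ^+ n * (c / alpha).
  rewrite -mulrA; apply: ler_wpM2r => //; rewrite exprMn.
  apply: ler_wpM2l; first exact: sqr_ge0.
  by rewrite -normrX -real_normK ?num_real // ler_piMl ?normr_ge0 // normrX.
have lin_le : (r - 1) * r ^+ n * L <= `|r - 1| * `|r| ^+ n * `|L|.
  by rewrite -normrX -!normrM ler_norm.
lra.
Qed.

End Subcritical.

Lemma corrected_energy_bounded : exists T, forall n, qform M (V n) <= T.
Proof.
have [c c_ge0 load_le] := correction_load_sqr_le.
have [critical|subcritical] : alpha * (1 - 2 * gamma) = 2 \/ alpha * (1 - 2 * gamma) < 2.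
  case: stable => [gamma_ge_half|[_ [stab _]]]; first by right; have := alpha_gt0; nra.
  by move: stab; rewrite le_eqVlt => /orP[/eqP|]; [left|right].
- exact: corrected_energy_bounded_critical.
- exact: (corrected_energy_bounded_subcritical c_ge0 load_le).
Qed.

Lemma velocity_energy_bounded : exists T, forall n, qform M (v n) <= T.
Proof.
have psdM := spd_spsd pdM; have [T VT] := corrected_energy_bounded.
exists (2 * T + 2 * ((alpha / dt) ^+ 2 * qform M (d 0))) => n.
have -> : v n = V n - (alpha / dt * r ^+ n) *: d 0 by rewrite addrK.
apply: le_trans (qformB_le psdM _ _) _; rewrite qformZ.
apply: lerD; rewrite ler_pM2l //.
by apply: ler_wpM2r; [exact: qform_ge0 | exact: correction_sqr_le].
Qed.

Hypothesis row_free_C : row_free C.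

Theorem baumgarte_bounded :
  [/\ bounded_seq v, bounded_seq (fun n => d n.+1 - d n),
      bounded_seq (fun n => lam n.+1 - lam n) & bounded_seq (fun n => C *m d n)].
Proof.
have [T vT] := velocity_energy_bounded.
have bounded_v : bounded_seq v := bounded_seq_qform pdM (ex_intro _ T vT).
have bounded_dd : bounded_seq (fun n => d n.+1 - d n).
  apply: (@eq_bounded_seq _ _ _ (fun n => dt *: ((1 - gamma) *: v n + gamma *: v n.+1))).
    by move=> n; rewrite newmark addrAC subrr add0r.
  by apply/bounded_seqZ/bounded_seqD; apply: bounded_seqZ => //; exact: bounded_seq_shift.
split=> //.
  have /row_freeP[B CB] := row_free_C.
  apply: (@eq_bounded_seq _ _ _
    (fun n => B^T *m (M *m (v n.+1 - v n) + K *m (d n.+1 - d n)))).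
    move=> n; rewrite !mulmxBr addrACA -opprD !equilibrium -mulmxBr mulmxA.
    by rewrite -trmx_mul CB trmx1 mul1mx.
  apply/bounded_seq_mull/bounded_seqD; apply: bounded_seq_mull => //.
  by apply: bounded_seqD; [exact: bounded_seq_shift | exact: bounded_seqN].
apply: (@eq_bounded_seq _ _ _ (fun n => r ^+ n *: (C *m d 0))).
  by move=> n; rewrite [RHS]constraint_drift.
by apply: bounded_seq_geom; exact: stable_ratio_le1.
Qed.

End Stability.

End BaumgarteScheme.

Section BlockDiagonal.
Variables (R : realType) (S : nat) (m : 'I_S -> nat).
Implicit Types (A B : forall i, 'M[R]_(m i)).

Lemma qform_mxdiag_mxcol A (x : forall i, 'cV[R]_(m i)) :
  qform (mxdiag A) (mxcol x) = \sum_i qform (A i) (x i).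
Proof.
rewrite /qform /bform -mulmxA mul_mxdiag_mxcol tr_mxcol mul_mxrow_mxcol summxE.
by apply: eq_bigr => i _; rewrite mulmxA.
Qed.

Lemma qform_mxdiag A (y : 'cV[R]_(\sum_i m i)) :
  qform (mxdiag A) y = \sum_i qform (A i) (submxcol y i).
Proof. by rewrite -{1}(submxcolK y) qform_mxdiag_mxcol. Qed.

Lemma spsd_mxdiag A : (forall i, spsd_mx (A i)) -> spsd_mx (mxdiag A).
Proof.
move=> psdA; split; first by rewrite /sym_mx tr_mxdiag; apply: eq_mxdiag => i; case: (psdA i).
move=> y; change (0 <= qform (mxdiag A) y); rewrite qform_mxdiag sumr_ge0 // => i _.
exact: qform_ge0.
Qed.

Lemma spd_mxdiag A : (forall i, spd_mx (A i)) -> spd_mx (mxdiag A).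
Proof.
move=> pdA; have [symA _] := spsd_mxdiag (fun i => spd_spsd (pdA i)); split=> // y y_neq0.
have [i yi_neq0] : exists i, submxcol y i != 0.
  apply/existsP; apply: contraR y_neq0; rewrite negb_exists => /forallP yi0.
  by rewrite -(submxcolK y) -mxcol0; apply/eqP/eq_mxcol => i; apply/eqP/negPn.
change (0 < qform (mxdiag A) y); rewrite qform_mxdiag (bigD1 i) //=.
rewrite ltr_pwDl ?(qform_gt0 (pdA i)) //.
by rewrite sumr_ge0 // => j _; exact/qform_ge0/spd_spsd.
Qed.

Lemma qform_mxdiag_le (a c : R) A B :
  (forall i x, a * qform (A i) x <= c * qform (B i) x) ->
  forall y, a * qform (mxdiag A) y <= c * qform (mxdiag B) y.
Proof. by move=> AB y; rewrite !qform_mxdiag !mulr_sumr ler_sum. Qed.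

Lemma submxcolZ b (k : R) (y : 'M[R]_(\sum_i m i, b)) i :
  submxcol (k *: y) i = k *: submxcol y i.
Proof. by apply/matrixP => j l; rewrite !mxE. Qed.

Lemma bounded_seq_submxcol b (x : nat -> 'M[R]_(\sum_i m i, b)) i :
  bounded_seq x -> bounded_seq (fun n => submxcol (x n) i).
Proof. by move=> [c xc]; exists c => n j k; rewrite mxE. Qed.

End BlockDiagonal.

Lemma stable_mxdiag (R : realType) S (m : 'I_S -> nat) (M K : forall i, 'M[R]_(m i))
    (gamma dt alpha : R) (wmax : 'I_S -> R) :
  (forall i, spd_mx (M i)) -> (forall i, spsd_mx (K i)) -> 0 < dt ->
  (forall i, largest_gen_eigenvalue (K i) (M i) (wmax i)) ->
  (1 / 2 <= gamma <= 1) \/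
  (0 <= gamma < 1 / 2 /\ alpha <= 1 / `|gamma - 1 / 2| /\
   (forall i, dt * wmax i <= 2 / (1 - 2 * gamma) - alpha)) ->
  1 / 2 <= gamma \/ (gamma < 1 / 2 /\ alpha * (1 - 2 * gamma) <= 2 /\
    forall x, dt * qform (mxdiag K) x <= (2 / (1 - 2 * gamma) - alpha) * qform (mxdiag M) x).
Proof.
move=> pdM psdK dt_gt0 wmaxE [/andP[? _]|[/andP[_ gamma_lt_half] [alpha_le dt_wmax_le]]].
  by left.
right; split=> //; split.
  have gap_gt0 : 0 < 1 / 2 - gamma by lra.
  move: alpha_le; rewrite ler0_norm ?opprB ?ler_pdivlMr //; lra.
apply: qform_mxdiag_le => i x; have [symK _] := psdK i.
have wmax_bound := largest_gen_eigenvalue_rayleigh symK (pdM i) (wmaxE i) x.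
apply: le_trans (ler_wpM2r (qform_ge0 (spd_spsd (pdM i)) x) (dt_wmax_le i)).
by rewrite -mulrA; apply: ler_wpM2l => //; exact: ltW.
Qed.

Unset Implicit Arguments. Set Strict Implicit.

Theorem mainTheorem5 (R : realType) (S p : nat) (m : 'I_S -> nat)
  (M K : forall i : 'I_S, 'M[R]_(m i))
  (C : forall i : 'I_S, 'M[R]_(p, m i))
  (gamma dt alpha : R) (wmax : 'I_S -> R)
  (d v : nat -> forall i : 'I_S, 'cV[R]_(m i))
  (lam : nat -> 'cV[R]_p) :
  (1 <= S)%N ->
  (forall i, spd_mx (M i)) ->
  (forall i, spsd_mx (K i)) ->
  (forall i, signed_boolean_mx (C i)) ->
  \rank (mxrow C) = p ->
  0 <= gamma <= 1 -> 0 < dt -> 0 < alpha ->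
  (forall i, largest_gen_eigenvalue (K i) (M i) (wmax i)) ->
  ((1 / 2 <= gamma <= 1) \/
   (0 <= gamma < 1 / 2 /\ alpha <= 1 / `|gamma - 1 / 2| /\
    (forall i, dt * wmax i <= 2 / (1 - 2 * gamma) - alpha))) ->
  (forall n i, M i *m v n i + K i *m d n i = (C i)^T *m lam n) ->
  (forall n, \sum_(i < S) C i *m v n i + (alpha / dt) *: \sum_(i < S) C i *m d n i = 0) ->
  (forall n i, d n.+1 i = d n i + dt *: ((1 - gamma) *: v n i + gamma *: v n.+1 i)) ->
  (forall i, bounded_seq (fun n => v n i)) /\
  (forall i, bounded_seq (fun n => d n.+1 i - d n i)) /\
  bounded_seq (fun n => lam n.+1 - lam n) /\
  bounded_seq (fun n => \sum_(i < S) C i *m d n i).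
Proof.
move=> _ pdM psdK _ rankC /andP[gamma_ge0 gamma_le1] dt_gt0 alpha_gt0 wmaxE stable
  equilibrium baumgarte newmark.
have equilibrium_blocks n :
    mxdiag M *m mxcol (v n) + mxdiag K *m mxcol (d n) = (mxrow C)^T *m lam n.
  rewrite !mul_mxdiag_mxcol -mxcolD tr_mxrow mxcol_mul.
  by apply: eq_mxcol => i; exact: equilibrium.
have baumgarte_blocks n :
    mxrow C *m mxcol (v n) + (alpha / dt) *: (mxrow C *m mxcol (d n)) = 0.
  by rewrite !mul_mxrow_mxcol.
have newmark_blocks n : mxcol (d n.+1)
    = mxcol (d n) + dt *: ((1 - gamma) *: mxcol (v n) + gamma *: mxcol (v n.+1)).
  by apply/mxcolP => i; rewrite !(submxcolD, submxcolZ) !mxcolK newmark.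
have row_free_C : row_free (mxrow C) by rewrite /row_free rankC.
have [bounded_v bounded_dd bounded_dlam bounded_drift] :=
  baumgarte_bounded gamma_ge0 dt_gt0 alpha_gt0 equilibrium_blocks baumgarte_blocks
    newmark_blocks (spd_mxdiag pdM) (spsd_mxdiag psdK) gamma_le1
    (stable_mxdiag pdM psdK dt_gt0 wmaxE stable) row_free_C.
split; [|split; [|split]] => //.
- by move=> i; apply: eq_bounded_seq (bounded_seq_submxcol i bounded_v) => n; rewrite mxcolK.
- move=> i; apply: eq_bounded_seq (bounded_seq_submxcol i bounded_dd) => n.
  by rewrite submxcolB !mxcolK.
- by apply: eq_bounded_seq bounded_drift => n; rewrite mul_mxrow_mxcol.
Qed.
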